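(* Let $N \ge 0$ and $k \ge 1$ be integers and let $f:\{0,\dots,N\}^k \to \{\mathbf{true},\mathbf{false}\}$ be a feasibility function. Let $\vec x \in \{0,\dots,N\}^k$ with $f(\vec x) = \mathbf{true}$. Then the procedure $\textsc{SearchParetoPoint}(\vec x,k,f)$ returns a Pareto point $\vec z$ of $f$ with $\vec z \le_k \vec x$.
   Context: For $\vec x = (x_1,\dots,x_k), \vec x' = (x'_1,\dots,x'_k) \in \{0,\dots,N\}^k$, write $\vec x \le_k \vec x'$ iff $x_i \le x'_i$ for all $i$; $\vec x$ is smaller than $\vec x'$ if $\vec x \le_k \vec x'$ and $\vec x \ne \vec x'$. A feasibility function is a map $f:\{0,\dots,N\}^k\to\{\mathbf{true},\mathbf{false}\}$ that is monotone: if $f(\vec x)=\mathbf{true}$ then $f(\vec x')=\mathbf{true}$ for every $\vec x'$ greater than $\vec x$. A point $\vec x$ is a Pareto point (Pareto optimum) of $f$ if $f(\vec x)=\mathbf{true}$ and $f(\vec x')=\mathbf{false}$ for every $\vec x'$ smaller than $\vec x$. Procedure $\textsc{SearchParetoPoint}(\vec x,k,f)$: for $i = 1,\dots,k$ in order: set $\mathit{max} := x_i+1$ and $\mathit{min} := 0$; while $\mathit{max}-\mathit{min} > 1$: set $\mathit{mid} := \mathit{min} + \lfloor (\mathit{max}-\mathit{min}-1)/2 \rfloor$, set $x_i := \mathit{mid}$, and if $f(\vec x) = \mathbf{true}$ set $\mathit{max} := \mathit{mid}+1$, otherwise set $\mathit{min} := \mathit{mid}+1$; after the while loop set $x_i :=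 \mathit{min}$. After all $k$ coordinates have been processed, return the current $\vec x$. *)

From mathcomp Require Import all_boot.
Set Implicit Arguments. Unset Strict Implicit. Unset Printing Implicit Defensive.

(* A point of {0,...,N}^k, coordinates indexed by 'I_k (coordinate i+1 of the
   paper is index i here). *)
Definition point (N k : nat) := {ffun 'I_k -> 'I_N.+1}.

Definition lek (N k : nat) (x x' : point N k) : bool :=
  [forall i, (x i <= x' i)%N].

Definition smaller (N k : nat) (x x' : point N k) : bool :=
  lek x x' && (x != x').

Definition feasibility (N k : nat) (f : point N k -> bool) : Prop :=
  forall x x' : point N k, f x -> smaller x x' -> f x'.

Definition pareto_point (N k : nat) (f : point N k -> bool) (x : point N k) : Prop :=
  f x /\ forall x' : point N k, smaller x' x -> f x' = false.

(* x with coordinate i set to v (v is always <= N when used below). *)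
Definition setc (N k : nat) (x : point N k) (i : 'I_k) (v : nat) : point N k :=
  [ffun j => if j == i then inord v else x j].

(* The while loop "while max - min > 1 do ...", run with a fuel bound.
   Each iteration strictly decreases max - min, which starts at x_i + 1,
   so fuel x_i + 1 is never exhausted before the loop condition fails. *)
Fixpoint bsearch (N k : nat) (f : point N k -> bool) (fuel : nat)
    (x : point N k) (i : 'I_k) (mn mx : nat) : point N k * nat :=
  match fuel with
  | 0 => (x, mn)
  | fuel'.+1 =>
    if (1 < mx - mn)%N then
      let mid := (mn + (mx - mn - 1)./2)%N in
      let x1 := setc x i mid in
      if f x1 then bsearch f fuel' x1 i mn mid.+1
      else bsearch f fuel' x1 i mid.+1 mx
    else (x, mn)
  end.

Definition search_coord (N k : nat) (f : point N k -> bool)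
    (x : point N k) (i : 'I_k) : point N k :=
  let r := bsearch f (x i).+1 x i 0 (x i).+1 in
  setc r.1 i r.2.

Definition SearchParetoPoint (N k : nat) (x : point N k)
    (f : point N k -> bool) : point N k :=
  foldl (search_coord f) x (enum 'I_k).

(** Binary search on coordinate [i] maintains a window [[min, max)] with [f]
    false below [min] and true at [max - 1] (with the other coordinates fixed),
    so it ends with the least feasible value of [x_i]. By monotonicity,
    lowering later coordinates keeps every earlier coordinate minimal, so the
    final point [z] is feasible and cannot be lowered in any single coordinate.
    A feasible point [y] below [z] with [y_i < z_i] would make [z] with [z_i]
    replaced by [y_i] feasible, hence [z] is a Pareto point. *)

From mathcomp Require Import all_boot zify.
Set Implicit Arguments. Unset Strict Implicit.

Section Points.
Variables N k : nat.
Implicit Types (x y z : point N k) (i j : 'I_k).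

Lemma lek_refl x : lek x x.
Proof. exact/forallP. Qed.

Lemma lek_trans x y z : lek x y -> lek y z -> lek x z.
Proof.
move=> /forallP hxy /forallP hyz; apply/forallP => i.
exact: leq_trans (hxy i) (hyz i).
Qed.

Lemma setcE x i v j : v <= N -> (setc x i v j : nat) = if j == i then v else x j.
Proof. by move=> hv; rewrite ffunE; case: (j == i); rewrite ?inordK. Qed.

Lemma setc_other x i v j : j != i -> setc x i v j = x j.
Proof. by move=> ji; rewrite ffunE (negbTE ji). Qed.

Lemma setc_id x i : setc x i (x i) = x.
Proof.
apply/ffunP => j; rewrite ffunE; case: eqP => // ->.
by apply/val_inj; rewrite /= inordK.
Qed.

Lemma eq_setc x y i v : (forall j, j != i -> x j = y j) -> setc x i v = setc y i v.
Proof. by move=> xy; apply/ffunP => j; rewrite !ffunE; case: eqP => // /eqP /xy. Qed.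

Lemma lek_setc_val x i u v : u <= v -> v <= N -> lek (setc x i u) (setc x i v).
Proof.
move=> uv vN; apply/forallP => j; rewrite !setcE ?(leq_trans uv) //.
by case: ifP.
Qed.

Lemma lek_setc_point x y i v : v <= N -> lek x y -> lek (setc x i v) (setc y i v).
Proof.
move=> vN /forallP xy; apply/forallP => j; rewrite !setcE //.
by case: ifP.
Qed.

Lemma lek_setc_at y z i : lek y z -> lek y (setc z i (y i)).
Proof.
move=> /forallP yz; apply/forallP => j; rewrite setcE ?leq_ord //.
by case: eqP => [->|].
Qed.

Lemma lek_neq_lt (y z : point N k) : lek y z -> y != z -> exists i, y i < z i.
Proof.
move=> /forallP yz; case: (pickP (fun i => y i < z i)) => [i lt_yz _|y_ge].
  by exists i.
case/eqP; apply/ffunP => i; apply/val_inj/eqP.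
by rewrite eqn_leq yz leqNgt y_ge.
Qed.

End Points.

Section Search.
Variables N k : nat.
Variables (f : point N k -> bool) (hf : feasibility f).
Implicit Types (x y z w : point N k) (i j : 'I_k) (S : seq 'I_k).

Lemma feasible_lek x y : f x -> lek x y -> f y.
Proof.
move=> fx xy; case: (eqVneq x y) => [<- //|ne].
by apply: hf fx _; rewrite /smaller xy ne.
Qed.

Lemma infeasible_lek x y : f y = false -> lek x y -> f x = false.
Proof. by move=> fy xy; apply: contraFF fy => fx; apply: feasible_lek fx xy. Qed.

Definition coord_minimal S w :=
  forall i, i \in S -> forall v, v < w i -> f (setc w i v) = false.

Lemma coord_minimal_pareto z :
  f z -> coord_minimal (enum 'I_k) z -> pareto_point f z.
Proof.
move=> fz zmin; split => // y /andP [yz ne].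
have [i lt_yz] := lek_neq_lt yz ne.
apply: infeasible_lek (zmin i (mem_enum _ i) _ lt_yz) _.
exact: lek_setc_at.
Qed.

Lemma bsearch_least x0 i fuel : forall x mn mx,
  (forall j, j != i -> x j = x0 j) -> mn < mx -> mx <= (x0 i).+1 ->
  mx - mn <= fuel.+1 -> f (setc x0 i mx.-1) ->
  (forall v, v < mn -> f (setc x0 i v) = false) ->
  let r := bsearch f fuel x i mn mx in
  [/\ forall j, j != i -> r.1 j = x0 j, r.2 <= x0 i, f (setc x0 i r.2)
    & forall v, v < r.2 -> f (setc x0 i v) = false].
Proof.
have x0N : x0 i <= N by apply: leq_ord.
elim: fuel => [|fuel IH] x mn mx x_x0 mn_mx mx_le fuel_ge f_top f_low /=.
  have e : mx.-1 = mn by lia.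
  by rewrite e in f_top; split => //=; lia.
case: ltnP => [wide|narrow]; last first.
  have e : mx.-1 = mn by lia.
  by rewrite e in f_top; split => //=; lia.
set mid := mn + (mx - mn - 1)./2.
have [mn_mid mid_mx] : mn <= mid /\ mid < mx.-1 by rewrite /mid; lia.
have x1_x0 : forall j, j != i -> setc x0 i mid j = x0 j.
  by move=> j ji; rewrite setc_other.
rewrite (eq_setc _ x_x0); case f_mid: (f (setc x0 i mid)).
  by apply: IH => //; lia.
apply: IH => //; [lia | lia |].
move=> v lt_v_mid; case: (ltnP v mn) => [|mn_v]; first exact: f_low.
by apply: infeasible_lek f_mid _; apply: lek_setc_val; lia.
Qed.

Lemma search_coord_least w i : f w ->
  [/\ forall j, j != i -> search_coord f w i j = w j,
      search_coord f w i i <= w i, f (search_coord f w i)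
    & forall v, v < search_coord f w i i -> f (setc w i v) = false].
Proof.
move=> fw; rewrite /search_coord.
have := @bsearch_least w i (w i).+1 w 0 (w i).+1.
case=> //; first by rewrite /= setc_id.
move=> r_off r_le f_r r_low.
have rN : (bsearch f (w i).+1 w i 0 (w i).+1).2 <= N.
  exact: leq_trans r_le (leq_ord _).
rewrite (eq_setc _ r_off) setcE // eqxx; split => //.
by move=> j ji; rewrite setc_other.
Qed.

Lemma search_coord_lek w i : f w -> lek (search_coord f w i) w.
Proof.
case/(search_coord_least i) => s_off s_le _ _; apply/forallP => j.
by case: (eqVneq j i) => [->|ji] //; rewrite s_off.
Qed.

(* Lowering coordinate [i] keeps each coordinate [j] of [S] minimal, since
   [setc w' j v <= setc w j v]. *)
Lemma search_coord_minimal S w i :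
  f w -> coord_minimal S w -> coord_minimal (rcons S i) (search_coord f w i).
Proof.
move=> fw wmin; have [s_off _ _ s_low] := search_coord_least i fw.
move=> j; have [-> _ v lt_v|ji] := eqVneq j i.
  by rewrite (@eq_setc _ _ _ w) //; apply: s_low.
rewrite mem_rcons in_cons (negbTE ji) => jS v lt_v; rewrite s_off // in lt_v.
apply: infeasible_lek (wmin j jS v lt_v) _.
by apply: lek_setc_point (search_coord_lek i fw); apply: leq_trans (ltnW lt_v) (leq_ord _).
Qed.

Lemma foldl_search_coord s : forall S w, f w -> coord_minimal S w ->
  let z := foldl (search_coord f) w s in
  [/\ f z, lek z w & coord_minimal (S ++ s) z].
Proof.
elim: s => [|i s IH] S w fw wmin /=.
  by rewrite cats0; split => //; apply: lek_refl.
have [_ _ f_w' _] := search_coord_least i fw.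
rewrite -cat_rcons.
have [fz zw' zmin] := IH _ _ f_w' (search_coord_minimal fw wmin).
by split => //; apply: lek_trans zw' (search_coord_lek i fw).
Qed.

End Search.

Theorem lemma1 (N k : nat) (hk : (0 < k)%N) (f : point N k -> bool)
  (hf : feasibility f) (x : point N k) (hx : f x) :
  pareto_point f (SearchParetoPoint x f) /\ lek (SearchParetoPoint x f) x.
Proof.
have nil_minimal : coord_minimal f [::] x by [].
have [fz zx zmin] := foldl_search_coord hf (enum 'I_k) hx nil_minimal.
by split => //; apply: coord_minimal_pareto.
Qed.
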